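(* Let $\lambda_1,\lambda_2>0$. For $\nu\in(0,1)$ define, for $\theta\in\mathbb{R}$, $$\Psi^{(1)}_{\nu,\underline{\lambda}}(\theta):=\begin{cases}(\lambda_1(e^\theta-1))^{1/\nu} & \text{if } \theta\geq0,\\ (\lambda_2(e^{-\theta}-1))^{1/\nu} & \text{if } \theta<0,\end{cases}$$ $$\Psi^{(2)}_{\nu,\underline{\lambda}}(\theta):=\begin{cases}(\lambda_1(e^\theta-1)+\lambda_2(e^{-\theta}-1))^{1/\nu} & \text{if } \lambda_1(e^\theta-1)+\lambda_2(e^{-\theta}-1)\geq0,\\ 0 & \text{otherwise},\end{cases}$$ and for $k\in\{1,2\}$ let $I^{(k)}_{\mathrm{LD},\nu}(x):=\sup_{\theta\in\mathbb{R}}\{\theta x-\Psi^{(k)}_{\nu,\underline{\lambda}}(\theta)\}$. Let $\nu,\eta\in(0,1)$ with $\eta<\nu$. Then, for each $k\in\{1,2\}$, $I^{(k)}_{\mathrm{LD},\eta}(0)=I^{(k)}_{\mathrm{LD},\nu}(0)=0$ and there exists $\delta>0$ such that $I^{(k)}_{\mathrm{LD},\eta}(x)>I^{(k)}_{\mathrm{LD},\nu}(x)>0$ for all $x$ with $0<|x|<\delta$.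
   Context: In the paper, $I^{(1)}_{\mathrm{LD},\nu}$ and $I^{(2)}_{\mathrm{LD},\nu}$ are the large deviation rate functions (speed $t$) of $Y(t)/t$ and $Z(t)/t$ for the fractional Skellam processes of type 1 (with $\nu_1=\nu_2=\nu$) and type 2 respectively; the claim concerns only the explicitly defined functions above. *)

From HB Require Import structures.
From mathcomp Require Import all_boot all_order all_algebra.
From mathcomp Require Import all_classical all_reals all_analysis.
Set Implicit Arguments. Unset Strict Implicit. Unset Printing Implicit Defensive.
Import Order.TTheory GRing.Theory Num.Theory.
Local Open Scope ring_scope.
Local Open Scope classical_set_scope.

Definition Psi1 (R : realType) (l1 l2 nu theta : R) : R :=
  if 0 <= theta then powR (l1 * (expR theta - 1)) nu^-1
  else powR (l2 * (expR (- theta) - 1)) nu^-1.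

Definition Psi2 (R : realType) (l1 l2 nu theta : R) : R :=
  let a := l1 * (expR theta - 1) + l2 * (expR (- theta) - 1) in
  if 0 <= a then powR a nu^-1 else 0.

Definition legendre (R : realType) (Psi : R -> R) (x : R) : \bar R :=
  ereal_sup [set ((theta * x - Psi theta)%:E) | theta in [set: R]].

Definition ILD (R : realType) (k : nat) (l1 l2 nu x : R) : \bar R :=
  legendre (if k == 1%N then Psi1 l1 l2 nu else Psi2 l1 l2 nu) x.

From HB Require Import structures.
From mathcomp Require Import all_boot all_order all_algebra.
From mathcomp Require Import all_classical all_reals all_analysis.
From mathcomp Require Import ring lra.
Import Order.TTheory GRing.Theory Num.Theory.
Local Open Scope ring_scope.
Local Open Scope classical_set_scope.
Set Implicit Arguments. Unset Strict Implicit. Unset Printing Implicit Defensive.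

(* Both Psi^(k)_nu are G^(1/nu) for a nonnegative G that vanishes at 0, grows
   at least linearly at infinity and is locally Lipschitz.  Put p = 1/nu < q = 1/eta
   and f_p(t) = t x - G(t)^p.  For small |x|, f_p(t) > 0 forces t to stay bounded,
   so the supremum is finite and is approached only where G(t)^p <= 1/2.  There G
   cannot be small: where G(t) <= beta/2, stepping t by about beta towards the sign
   of x gains about beta |x| but costs at most beta^p = o(beta).  So near-maximisers
   have G(t) >= b > 0, and since G(t)^q <= (1/2)^(q/p - 1) G(t)^p, the q-term exceeds
   the p-term there by a fixed amount; this gives I_eta(x) > I_nu(x).  The same step
   taken from t = 0 gives I_nu(x) > 0. *)

Lemma expRD_sub_le (R : realType) (t d : R) :
  expR (t + d) - expR t <= d * expR (t + d).
Proof.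
have : (1 - d) * expR (t + d) <= expR (- d) * expR (t + d).
  by rewrite ler_wpM2r ?expR_ge0 // expR_ge1Dx.
rewrite -expRD (addrC (- d)) addrK mulrBl mul1r; lra.
Qed.

Lemma expR_lipschitz (R : realType) (T t d : R) : `|t| <= T -> `|d| <= 1 ->
  expR (t + d) - expR t <= expR (T + 1) * `|d|.
Proof.
move=> tT d1; apply: (le_trans (expRD_sub_le t d)); rewrite mulrC.
apply: (@le_trans _ _ (expR (t + d) * `|d|)).
  by rewrite ler_wpM2l ?expR_ge0 ?ler_norm.
rewrite ler_wpM2r ?ler_expR //.
by have := ler_norm t; have := ler_norm d; lra.
Qed.

Lemma exists_powR_le_mul (R : realType) (p c : R) : 1 < p -> 0 < c ->
  exists2 b, 0 < b <= 1 & b `^ p <= c * b.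
Proof.
move=> p1 c0; set b := Num.min 1 (c `^ (p - 1)^-1).
have b0 : 0 < b by rewrite lt_min ltr01 powR_gt0.
exists b; first by rewrite b0 ge_min lexx.
have p0 : 0 < p by apply: lt_trans p1.
rewrite -(mulr_powRB1 (ltW b0) p0) mulrC ler_wpM2r ?(ltW b0) //.
have -> : c = (c `^ (p - 1)^-1) `^ (p - 1).
  by rewrite -powRrM mulVf ?powRr1 ?(ltW c0) // subr_eq0 gt_eqF.
by rewrite ge0_ler_powR ?nnegrE ?powR_ge0 ?ge_min ?lexx ?orbT ?(ltW b0) ?subr_ge0 ?(ltW p1).
Qed.

Lemma powR_le_mul (R : realType) (a u r : R) : 0 <= u <= a -> 1 < r ->
  u `^ r <= a `^ (r - 1) * u.
Proof.
move=> /andP[u0 ua] r1.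
rewrite -(mulr_powRB1 u0 (lt_trans ltr01 r1)) mulrC ler_wpM2r //.
by rewrite ge0_ler_powR ?nnegrE ?subr_ge0 ?(ltW r1) ?(le_trans u0 ua).
Qed.

Lemma powR_lt1 (R : realType) (a s : R) : 0 <= a < 1 -> 0 < s -> a `^ s < 1.
Proof.
move=> /andP[a0 a1] s0.
by have := gt0_ltr_powR s0 (a0 : a \is Num.nneg) ler01 a1; rewrite powR1.
Qed.

Lemma powR_gap (R : realType) (a b p q : R) : 0 <= b <= a -> 0 < p < q ->
  a `^ p <= 2^-1 -> a `^ q + (1 - 2^-1 `^ (q / p - 1)) * b `^ p <= a `^ p.
Proof.
move=> /andP[b0 ba] /andP[p0 pq] ap; set h := 2^-1 `^ _.
have r1 : 1 < q / p by rewrite ltr_pdivlMr // mul1r.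
have h1 : h < 1 by rewrite powR_lt1 ?subr_gt0 //; lra.
have : a `^ q <= h * a `^ p.
  rewrite -[q](divfK (lt0r_neq0 p0)) mulrC powRrM.
  by rewrite powR_le_mul ?powR_ge0.
have : (1 - h) * b `^ p <= (1 - h) * a `^ p.
  rewrite ler_wpM2l ?subr_ge0 ?(ltW h1) //.
  by rewrite ge0_ler_powR ?nnegrE ?(ltW p0) ?(le_trans b0 ba).
lra.
Qed.

Lemma ereal_sup_lt_of_near_max (R : realType) (A B : R -> R) (M e : R) :
  0 < e -> (forall t, A t <= M) ->
  (forall t, (forall s, A s < A t + e) -> A t + e <= B t) ->
  (ereal_sup [set (A t)%:E | t in [set: R]] <
   ereal_sup [set (B t)%:E | t in [set: R]])%E.
Proof.
move=> e0 AM near_max; set S := ereal_sup _.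
have AS t : ((A t)%:E <= S)%E by apply: ereal_sup_ubound; exists t.
have SM : (S <= M%:E)%E by apply: ge_ereal_sup => _ [t _ <-]; rewrite lee_fin.
have Sfin : S \is a fin_num.
  by apply/fin_numPlt; rewrite (lt_le_trans (ltNyr _) (AS 0)) (le_lt_trans SM (ltry _)).
have [_ [t _ <-]] := ub_ereal_sup_adherent e0 Sfin.
rewrite -/S -(fineK Sfin) -EFinB lte_fin => St.
have AsS s : A s <= fine S by rewrite -lee_fin fineK.
have BtB : ((B t)%:E <= ereal_sup [set (B t)%:E | t in [set: R]])%E.
  by apply: ereal_sup_ubound; exists t.
apply: lt_le_trans BtB; rewrite -(fineK Sfin) lte_fin.
apply: (lt_le_trans _ (near_max t _)); first by lra.
by move=> s; apply: le_lt_trans (AsS s) _; lra.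
Qed.

Lemma legendre_ge (R : realType) (Psi : R -> R) (x t : R) :
  ((t * x - Psi t)%:E <= legendre Psi x)%E.
Proof. by apply: ereal_sup_ubound; exists t. Qed.

Lemma legendre_at0 (R : realType) (Psi : R -> R) :
  (forall t, 0 <= Psi t) -> Psi 0 = 0 -> legendre Psi 0 = 0%E.
Proof.
move=> Psi_ge0 Psi0; apply/eqP; rewrite eq_le; apply/andP; split.
- by apply: ge_ereal_sup => _ [t _ <-]; rewrite lee_fin mulr0 sub0r oppr_le0.
- by have := legendre_ge Psi 0 0; rewrite Psi0 mulr0 subr0.
Qed.

Definition poisson_cgf (R : realType) (l t : R) : R := l * (expR t - 1).

Section PoissonCgf.
Variables (R : realType) (l : R).
Hypothesis l_ge0 : 0 <= l.

Lemma poisson_cgf0 : poisson_cgf l 0 = 0.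
Proof. by rewrite /poisson_cgf expR0 subrr mulr0. Qed.

Lemma poisson_cgf_ge_lin (t : R) : l * t <= poisson_cgf l t.
Proof. by rewrite ler_wpM2l // lerBrDl expR_ge1Dx. Qed.

Lemma poisson_cgf_ge_opp (t : R) : - l <= poisson_cgf l t.
Proof. by rewrite /poisson_cgf mulrBr mulr1 -[leLHS]add0r lerD2r mulr_ge0 ?expR_ge0. Qed.

Lemma poisson_cgf_ge0 (t : R) : 0 <= t -> 0 <= poisson_cgf l t.
Proof. by move=> t0; rewrite mulr_ge0 // subr_ge0 -expR0 ler_expR. Qed.

Lemma poisson_cgf_le0 (t : R) : t <= 0 -> poisson_cgf l t <= 0.
Proof. by move=> t0; rewrite mulr_ge0_le0 // subr_le0 -expR0 ler_expR. Qed.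

Lemma poisson_cgf_lipschitz (T t d : R) : `|t| <= T -> `|d| <= 1 ->
  poisson_cgf l (t + d) <= poisson_cgf l t + l * expR (T + 1) * `|d|.
Proof.
move=> tT d1; rewrite -lerBlDl /poisson_cgf -mulrBr -mulrA ler_wpM2l //.
by rewrite opprB addrA subrK expR_lipschitz.
Qed.

End PoissonCgf.

Definition Psi1_base (R : realType) (l1 l2 t : R) : R :=
  Num.max (poisson_cgf l1 t) (poisson_cgf l2 (- t)).

Definition Psi2_base (R : realType) (l1 l2 t : R) : R :=
  Num.max (poisson_cgf l1 t + poisson_cgf l2 (- t)) 0.

Section SkellamBases.
Variables (R : realType) (l1 l2 : R).
Hypotheses (l1_ge0 : 0 <= l1) (l2_ge0 : 0 <= l2).

Lemma Psi1E (nu : R) : Psi1 l1 l2 nu = fun t => Psi1_base l1 l2 t `^ nu^-1.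
Proof.
apply: funext => t.
rewrite /Psi1 -/(poisson_cgf l1 t) -/(poisson_cgf l2 (- t)) /Psi1_base.
case: ifPn => [t0|]; last rewrite -ltNge => t0.
  have t0' : - t <= 0 by rewrite oppr_le0.
  by rewrite max_l // (le_trans (poisson_cgf_le0 l2_ge0 t0')) ?poisson_cgf_ge0.
have t0' : t <= 0 := ltW t0.
by rewrite max_r // (le_trans (poisson_cgf_le0 l1_ge0 t0')) ?poisson_cgf_ge0 ?oppr_ge0.
Qed.

Lemma Psi2E (nu : R) : nu != 0 -> Psi2 l1 l2 nu = fun t => Psi2_base l1 l2 t `^ nu^-1.
Proof.
move=> nu0; apply: funext => t.
rewrite /Psi2 -/(poisson_cgf l1 t) -/(poisson_cgf l2 (- t)) /Psi2_base /=.
case: ifPn => [a0|]; first by rewrite max_l.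
by rewrite -ltNge => a0; rewrite max_r ?powR0 ?invr_eq0 // ltW.
Qed.

Lemma Psi1_base_ge0 (t : R) : 0 <= Psi1_base l1 l2 t.
Proof.
rewrite le_max; case: (leP 0 t) => t0; first by rewrite poisson_cgf_ge0.
by rewrite (@poisson_cgf_ge0 _ _ l2_ge0 (- t)) ?orbT // oppr_ge0 ltW.
Qed.

Lemma Psi2_base_ge0 (t : R) : 0 <= Psi2_base l1 l2 t.
Proof. by rewrite le_max lexx orbT. Qed.

Lemma Psi1_base0 : Psi1_base l1 l2 0 = 0.
Proof. by rewrite /Psi1_base oppr0 !poisson_cgf0 maxxx. Qed.

Lemma Psi2_base0 : Psi2_base l1 l2 0 = 0.
Proof. by rewrite /Psi2_base oppr0 !poisson_cgf0 addr0 maxxx. Qed.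

Lemma Psi1_base_coercive (m t : R) : m <= l1 -> m <= l2 ->
  m * `|t| <= Psi1_base l1 l2 t.
Proof.
move=> ml1 ml2; rewrite le_max; case: (leP 0 t) => t0.
  rewrite ger0_norm //; apply/orP; left.
  by apply: (le_trans _ (poisson_cgf_ge_lin l1_ge0 t)); rewrite ler_wpM2r.
rewrite ltr0_norm //; apply/orP; right.
apply: (le_trans _ (poisson_cgf_ge_lin l2_ge0 (- t))).
by rewrite ler_wpM2r // oppr_ge0 ltW.
Qed.

Lemma Psi2_base_coercive (m t : R) : m <= l1 -> m <= l2 ->
  m * `|t| - (l1 + l2) <= Psi2_base l1 l2 t.
Proof.
move=> ml1 ml2; rewrite /Psi2_base le_max; apply/orP; left.
have [] : m * `|t| <= poisson_cgf l1 t \/ m * `|t| <= poisson_cgf l2 (- t).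
  by apply/orP; rewrite -le_max; apply: Psi1_base_coercive.
all: have := poisson_cgf_ge_opp l1_ge0 t; have := poisson_cgf_ge_opp l2_ge0 (- t).
all: by have := l1_ge0; have := l2_ge0; lra.
Qed.

Lemma Psi1_base_lipschitz (T t d : R) : `|t| <= T -> `|d| <= 1 ->
  Psi1_base l1 l2 (t + d) <= Psi1_base l1 l2 t + (l1 + l2) * expR (T + 1) * `|d|.
Proof.
move=> tT d1; have K0 : 0 <= expR (T + 1) * `|d| by rewrite mulr_ge0 ?expR_ge0.
have := mulr_ge0 l1_ge0 K0; have := mulr_ge0 l2_ge0 K0.
have := poisson_cgf_lipschitz l1_ge0 tT d1.
have := poisson_cgf_lipschitz l2_ge0 (_ : `|- t| <= T) (_ : `|- d| <= 1).
rewrite !normrN -opprD => /(_ tT d1).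
have : poisson_cgf l1 t <= Psi1_base l1 l2 t by rewrite le_max lexx.
have : poisson_cgf l2 (- t) <= Psi1_base l1 l2 t by rewrite le_max lexx orbT.
rewrite [Psi1_base _ _ (t + d)]/Psi1_base ge_max => ? ? ? ? ? ?; apply/andP; split; lra.
Qed.

Lemma Psi2_base_lipschitz (T t d : R) : `|t| <= T -> `|d| <= 1 ->
  Psi2_base l1 l2 (t + d) <= Psi2_base l1 l2 t + (l1 + l2) * expR (T + 1) * `|d|.
Proof.
move=> tT d1; have K0 : 0 <= expR (T + 1) * `|d| by rewrite mulr_ge0 ?expR_ge0.
have := mulr_ge0 l1_ge0 K0; have := mulr_ge0 l2_ge0 K0.
have := poisson_cgf_lipschitz l1_ge0 tT d1.
have := poisson_cgf_lipschitz l2_ge0 (_ : `|- t| <= T) (_ : `|- d| <= 1).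
rewrite !normrN -opprD => /(_ tT d1).
have : poisson_cgf l1 t + poisson_cgf l2 (- t) <= Psi2_base l1 l2 t by rewrite le_max lexx.
have := Psi2_base_ge0 t.
rewrite [Psi2_base _ _ (t + d)]/Psi2_base ge_max => ? ? ? ? ? ?; apply/andP; split; lra.
Qed.

End SkellamBases.

Section PowerLegendre.
Variables (R : realType) (G : R -> R) (m c : R).
Hypotheses (G_ge0 : forall t, 0 <= G t) (G0 : G 0 = 0) (m_gt0 : 0 < m)
  (G_coercive : forall t, m * `|t| - c <= G t)
  (G_lipschitz : forall T, exists L, forall t d,
     `|t| <= T -> `|d| <= 1 -> G (t + d) <= G t + L * `|d|).

(* Beyond Tcut, coercivity gives G t >= 1 and G t >= m |t| / 2. *)
Let Tcut := 2 * (1 + `|c|) / m.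

Let Tcut_gt0 : 0 < Tcut.
Proof. by rewrite divr_gt0 // mulr_gt0 // ltr_pwDl. Qed.

Lemma mul_le_powR_far (p x t : R) : 1 <= p -> `|x| <= m / 2 -> Tcut <= `|t| ->
  t * x <= G t `^ p.
Proof.
move=> p1 xm tT.
have := G_coercive t; have := ler_norm c; have := normr_ge0 c.
have mt : 2 * (1 + `|c|) <= m * `|t| by move: tT; rewrite /Tcut ler_pdivrMr // [_ * m]mulrC.
have tx : t * x <= `|t| * (m / 2).
  by rewrite (le_trans (ler_norm _)) // normrM ler_wpM2l.
move=> c0 cc Gc; have G1 : 1 <= G t by lra.
by apply: (le_trans tx); apply: le_trans (le1r_powR G1 p1); lra.
Qed.

Lemma legendre_term_le (p x t : R) : 1 <= p -> `|x| <= m / 2 ->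
  t * x - G t `^ p <= Tcut * `|x| /\ (0 < t * x - G t `^ p -> `|t| < Tcut).
Proof.
move=> p1 xm; case: (leP Tcut `|t|) => tT.
  have := mul_le_powR_far p1 xm tT.
  have : 0 <= Tcut * `|x| by rewrite mulr_ge0 // ltW.
  by split; lra.
have : t * x <= Tcut * `|x|.
  by rewrite (le_trans (ler_norm _)) // normrM ler_wpM2r // ltW.
by have := powR_ge0 (G t) p; split; lra.
Qed.

Lemma legendre_term_gain (p x T : R) : 1 < p -> x != 0 ->
  exists b g, [/\ 0 < b, 0 < g & forall t, `|t| <= T -> G t <= b ->
    exists s, t * x - G t `^ p + g <= s * x - G s `^ p].
Proof.
move=> p1 x0; have [L GL] := G_lipschitz T.
set K := Num.max L 1.
have K1 : 1 <= K by rewrite le_max lexx orbT.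
have LK : L <= K by rewrite le_max lexx.
have K0 : 0 < K := lt_le_trans ltr01 K1.
set a := `|x| / (4 * K).
have a0 : 0 < a by rewrite divr_gt0 ?normr_gt0 // mulr_gt0 // (lt_le_trans ltr01).
have [beta /andP[beta0 beta1] beta_p] := exists_powR_le_mul p1 a0.
exists (beta / 2), (a * beta); split; [exact: divr_gt0 | exact: mulr_gt0 | move=> t tT Gt].
set s := beta / (2 * K); set d := s * Num.sg x.
have s0 : 0 < s by rewrite divr_gt0 // mulr_gt0 // (lt_le_trans ltr01).
have ds : `|d| = s by rewrite normrM normr_sg x0 mulr1 gtr0_norm.
have dx : d * x = 2 * a * beta.
  by rewrite /d -mulrA -normrEsg /s /a; field; rewrite (gt_eqF K0).
have Gd : G (t + d) <= beta.
  have s1 : s <= 1.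
    by rewrite ler_pdivrMr ?mulr_gt0 // mul1r; lra.
  apply: (le_trans (GL t d tT _)); first by rewrite ds.
  have : L * s <= K * s by rewrite ler_wpM2r // ltW.
  have : K * s = beta / 2 by rewrite /s; field; rewrite (gt_eqF K0).
  by rewrite ds; lra.
have Gdp : G (t + d) `^ p <= a * beta.
  have p0 : 0 <= p := ltW (lt_trans ltr01 p1).
  by apply: (le_trans _ beta_p); rewrite ge0_ler_powR ?nnegrE ?G_ge0 ?(ltW beta0).
exists (t + d); have := powR_ge0 (G t) p; rewrite mulrDl dx; lra.
Qed.

Lemma legendre_powR_lt (p q x : R) : 1 < p -> p < q ->
  0 < `|x| <= m / 2 -> Tcut * `|x| <= 2^-1 ->
  (0 < legendre (fun t => G t `^ p)%R x)%E /\
  (legendre (fun t => G t `^ p)%R x < legendre (fun t => G t `^ q)%R x)%E.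
Proof.
move=> p1 pq /andP[x0 xm] xT; rewrite normr_gt0 in x0.
have p0 : 0 < p := lt_trans ltr01 p1.
have [b [g [b0 g0 gain]]] := legendre_term_gain Tcut p1 x0.
have [s0 gs0] : exists s0, g <= s0 * x - G s0 `^ p.
  have := gain 0; rewrite normr0 G0 => /(_ (ltW Tcut_gt0) (ltW b0)) [s0].
  by rewrite mul0r powR0 ?gt_eqF // subrr add0r; exists s0.
split; first by apply: lt_le_trans (legendre_ge _ x s0); rewrite lte_fin (lt_le_trans g0).
set h := 2^-1 `^ (q / p - 1).
have h1 : h < 1 by rewrite powR_lt1 ?subr_gt0 ?ltr_pdivlMr ?mul1r //; lra.
set e := Num.min g ((1 - h) * b `^ p).
have e0 : 0 < e by rewrite lt_min g0 mulr_gt0 ?subr_gt0 ?powR_gt0.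
apply: (ereal_sup_lt_of_near_max (M := Tcut * `|x|) e0).
  by move=> t; case: (legendre_term_le t (ltW p1) xm).
move=> t near_max.
have eg : e <= g by rewrite ge_min lexx.
have fpos : 0 < t * x - G t `^ p by have := near_max s0; lra.
have tT : `|t| < Tcut by case: (legendre_term_le t (ltW p1) xm) => _; apply.
have Gtb : b <= G t.
  rewrite leNgt; apply/negP => /ltW /(gain t (ltW tT)) [s].
  by have := near_max s; lra.
have Gtp : G t `^ p <= 2^-1.
  have : t * x <= Tcut * `|x|.
    by rewrite (le_trans (ler_norm _)) // normrM ler_wpM2r // ltW.
  lra.
have bG : 0 <= b <= G t by rewrite (ltW b0) Gtb.
have pq' : 0 < p < q by rewrite p0 pq.
have := powR_gap bG pq' Gtp; rewrite -/h.
have : e <= (1 - h) * b `^ p by rewrite ge_min lexx orbT.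
lra.
Qed.

Lemma legendre_powR_small (p q : R) : 1 < p -> p < q ->
  legendre (fun t => G t `^ q)%R 0 = 0%E /\
  legendre (fun t => G t `^ p)%R 0 = 0%E /\
  exists delta, 0 < delta /\ forall x, 0 < `|x| < delta ->
    (legendre (fun t => G t `^ p)%R x < legendre (fun t => G t `^ q)%R x)%E /\
    (0 < legendre (fun t => G t `^ p)%R x)%E.
Proof.
move=> p1 pq; have p0 : 0 < p := lt_trans ltr01 p1.
have at0 r : 0 < r -> legendre (fun t => G t `^ r)%R 0 = 0%E.
  by move=> r0; apply: legendre_at0 => [t|]; rewrite ?powR_ge0 // G0 powR0 ?gt_eqF.
split; [exact/at0/(lt_trans p0) | split; first exact: at0].
exists (Num.min (m / 2) (2 * Tcut)^-1); split.
  by rewrite lt_min divr_gt0 // invr_gt0 (mulr_gt0 _ Tcut_gt0).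
move=> x /andP[x0]; rewrite lt_min => /andP[xm xT].
have xT' : Tcut * `|x| <= 2^-1.
  have -> : 2^-1 = Tcut * (2 * Tcut)^-1 by field; rewrite gt_eqF ?Tcut_gt0.
  by rewrite ler_pM2l ?Tcut_gt0 // ltW.
have x_small : 0 < `|x| <= m / 2 by rewrite x0 (ltW xm).
by have [] := legendre_powR_lt p1 pq x_small xT'.
Qed.

End PowerLegendre.

Theorem proposition5p5 (R : realType) (l1 l2 nu eta : R) :
  0 < l1 -> 0 < l2 -> 0 < nu < 1 -> 0 < eta < 1 -> eta < nu ->
  forall k : nat, (k == 1%N) || (k == 2%N) ->
    ILD k l1 l2 eta 0 = 0%E /\ ILD k l1 l2 nu 0 = 0%E /\
    exists delta : R, 0 < delta /\
      forall x : R, 0 < `|x| < delta ->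
        (ILD k l1 l2 nu x < ILD k l1 l2 eta x)%E /\ (0 < ILD k l1 l2 nu x)%E.
Proof.
move=> l1_gt0 l2_gt0 /andP[nu0 nu1] /andP[eta0 eta1] eta_nu k.
have l1_ge0 := ltW l1_gt0; have l2_ge0 := ltW l2_gt0.
have p1 : 1 < nu^-1 by rewrite invf_gt1.
have pq : nu^-1 < eta^-1 by rewrite ltf_pV2.
have m_gt0 : 0 < Num.min l1 l2 by rewrite lt_min l1_gt0.
have ml1 : Num.min l1 l2 <= l1 by rewrite ge_min lexx.
have ml2 : Num.min l1 l2 <= l2 by rewrite ge_min lexx orbT.
case/orP => /eqP -> ; rewrite /ILD /=.
- rewrite !Psi1E //; apply: (legendre_powR_small (c := 0) _ _ m_gt0) => //.
  + exact: Psi1_base_ge0.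
  + exact: Psi1_base0.
  + by move=> t; rewrite subr0 Psi1_base_coercive.
  + by move=> T; exists ((l1 + l2) * expR (T + 1)); exact: Psi1_base_lipschitz.
- rewrite !Psi2E ?gt_eqF //; apply: (legendre_powR_small (c := l1 + l2) _ _ m_gt0) => //.
  + exact: Psi2_base_ge0.
  + exact: Psi2_base0.
  + by move=> t; rewrite Psi2_base_coercive.
  + by move=> T; exists ((l1 + l2) * expR (T + 1)); exact: Psi2_base_lipschitz.
Qed.
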